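(* Let $M\in\{0,1\}^{m\times n}$. Then $\operatorname{disc}^{-}(M)\geq \operatorname{disc}^{+}(M)/3$ and $\operatorname{disc}^{+}(M)\geq \operatorname{disc}^{-}(M)/3$; in particular $\operatorname{disc}^+(M)=\Theta(\operatorname{disc}^-(M))$.
   Context: For $M\in\{0,1\}^{m\times n}$, $|M|$ is the number of $1$ entries, $p=|M|/(mn)$, and for $X\subset[m]$, $Y\subset[n]$, $\operatorname{disc}(X,Y)=|M[X\times Y]|-p|X||Y|$, where $|M[X\times Y]|$ is the number of $1$ entries of the submatrix with rows $X$ and columns $Y$. The positive discrepancy is $\operatorname{disc}^{+}(M)=\max_{X\subset[m],Y\subset[n]}\operatorname{disc}(X,Y)$ and the negative discrepancy is $\operatorname{disc}^{-}(M)=\max_{X\subset[m],Y\subset[n]}(-\operatorname{disc}(X,Y))$. *)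

From mathcomp Require Import all_boot all_order all_algebra.
Set Implicit Arguments. Unset Strict Implicit. Unset Printing Implicit Defensive.
Import Order.TTheory GRing.Theory Num.Theory.
Local Open Scope ring_scope.

Definition ones_in (m n : nat) (M : 'M[bool]_(m, n)) (X : {set 'I_m}) (Y : {set 'I_n}) : nat :=
  #|[set ij : 'I_m * 'I_n | (ij.1 \in X) && (ij.2 \in Y) && M ij.1 ij.2]|.

Definition ones (m n : nat) (M : 'M[bool]_(m, n)) : nat := ones_in M setT setT.

(* density p = |M| / (mn)  (for m n = 0 the value is irrelevant, as |X||Y| = 0) *)
Definition density (m n : nat) (M : 'M[bool]_(m, n)) : rat := (ones M)%:R / (m * n)%:R.

Definition disc (m n : nat) (M : 'M[bool]_(m, n)) (X : {set 'I_m}) (Y : {set 'I_n}) : rat :=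
  (ones_in M X Y)%:R - density M * (#|X| * #|Y|)%:R.

(* maximum over all X, Y (disc(empty,empty) = 0, so seeding the max with 0 is harmless) *)
Definition disc_plus (m n : nat) (M : 'M[bool]_(m, n)) : rat :=
  \big[Num.max/0]_(X : {set 'I_m}) \big[Num.max/0]_(Y : {set 'I_n}) disc M X Y.

Definition disc_minus (m n : nat) (M : 'M[bool]_(m, n)) : rat :=
  \big[Num.max/0]_(X : {set 'I_m}) \big[Num.max/0]_(Y : {set 'I_n}) - disc M X Y.

From mathcomp Require Import all_boot all_order all_algebra.
From mathcomp Require Import ring lra.
Set Implicit Arguments. Unset Strict Implicit.
Import Order.TTheory GRing.Theory Num.Theory.
Local Open Scope ring_scope.

(* Splitting the rows into X and its complement, and the columns into Y and
   its complement, cuts [m] x [n] into four rectangles whose discrepancies sum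
   to disc([m], [n]) = |M| - p m n = 0.  Hence any one of them is minus the sum
   of the other three, so it is at most 3 disc^- (and at least -3 disc^+). *)

Section DoubleMax.

Variables (R : realDomainType) (I J : finType).

Definition bimax (f : {set I} -> {set J} -> R) : R :=
  \big[Num.max/0]_(X : {set I}) \big[Num.max/0]_(Y : {set J}) f X Y.

Lemma le_bimax f X Y : f X Y <= bimax f.
Proof.
apply: le_trans (le_bigmax _ (fun X => \big[Num.max/0]_(Y : {set J}) f X Y) X).
exact: (le_bigmax _ (f X) Y).
Qed.

Lemma bimax_ge0 f : 0 <= bimax f.
Proof. exact: bigmax_ge_id. Qed.

Lemma bimax_le f c : 0 <= c -> (forall X Y, f X Y <= c) -> bimax f <= c.
Proof.
move=> c_ge0 f_le; apply/bigmax_leP; split=> // X _.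
by apply/bigmax_leP; split=> // Y _; apply: f_le.
Qed.

Definition quadrant_sum_zero (f : {set I} -> {set J} -> R) :=
  forall X Y, f X Y + f (~: X) Y + f X (~: Y) + f (~: X) (~: Y) = 0.

Lemma bimax_le_3_bimaxN f :
  quadrant_sum_zero f -> bimax f <= 3 * bimax (fun X Y => - f X Y).
Proof.
move=> f_quad; set g := fun X Y => - f X Y.
have g_le := le_bimax g; have g_ge0 := bimax_ge0 g.
apply: bimax_le => [|X Y]; first lra.
have := f_quad X Y; have := g_le (~: X) Y; have := g_le X (~: Y).
by have := g_le (~: X) (~: Y); rewrite /g; lra.
Qed.

Lemma quadrant_sum_zeroN f :
  quadrant_sum_zero f -> quadrant_sum_zero (fun X Y => - f X Y).
Proof. by move=> f_quad X Y; rewrite -!opprD f_quad oppr0. Qed.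

Lemma bimaxN_le_3_bimax f :
  quadrant_sum_zero f -> bimax (fun X Y => - f X Y) <= 3 * bimax f.
Proof.
move=> /quadrant_sum_zeroN /bimax_le_3_bimaxN.
by under [bimax (fun X Y => - - _)]eq_bigr do under eq_bigr do rewrite opprK.
Qed.

End DoubleMax.

Section Discrepancy.

Variables (m n : nat) (M : 'M[bool]_(m, n)).

Lemma ones_inCl X Y :
  (ones_in M X Y + ones_in M (~: X) Y = ones_in M setT Y)%N.
Proof.
rewrite /ones_in -(cardsID [set ij : 'I_m * 'I_n | ij.1 \in X]
   [set ij : 'I_m * 'I_n | (ij.1 \in setT) && (ij.2 \in Y) && M ij.1 ij.2]).
by congr (_ + _)%N; apply: eq_card => ij; rewrite !inE /=;
  case: (ij.1 \in X); case: (ij.2 \in Y); case: (M ij.1 ij.2).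
Qed.

Lemma ones_inCr X Y :
  (ones_in M X Y + ones_in M X (~: Y) = ones_in M X setT)%N.
Proof.
rewrite /ones_in -(cardsID [set ij : 'I_m * 'I_n | ij.2 \in Y]
   [set ij : 'I_m * 'I_n | (ij.1 \in X) && (ij.2 \in setT) && M ij.1 ij.2]).
by congr (_ + _)%N; apply: eq_card => ij; rewrite !inE /=;
  case: (ij.1 \in X); case: (ij.2 \in Y); case: (M ij.1 ij.2).
Qed.

Lemma ones_le : (ones M <= m * n)%N.
Proof.
by apply: leq_trans (max_card _) _; rewrite card_prod !card_ord.
Qed.

Lemma density_mulr : density M * (m * n)%:R = (ones M)%:R.
Proof.
have [mn0 | mn_gt0] := posnP (m * n).
  have /eqP ones0 : ones M == 0%N by rewrite -leqn0 -mn0 ones_le.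
  by rewrite mn0 ones0 mulr0.
by rewrite /density mulfVK // pnatr_eq0 -lt0n.
Qed.

Lemma discCl X Y : disc M X Y + disc M (~: X) Y = disc M setT Y.
Proof.
rewrite /disc -(ones_inCl X) cardsT -(cardsC X) mulnDl !natrD; ring.
Qed.

Lemma discCr X Y : disc M X Y + disc M X (~: Y) = disc M X setT.
Proof.
rewrite /disc -(ones_inCr X Y) cardsT -(cardsC Y) mulnDr !natrD; ring.
Qed.

Lemma discTT : disc M setT setT = 0.
Proof. by rewrite /disc !cardsT !card_ord density_mulr subrr. Qed.

Lemma disc_quadrant_sum_zero : quadrant_sum_zero (disc M).
Proof. by move=> X Y; rewrite discCl -addrA discCl discCr discTT. Qed.

End Discrepancy.

Theorem claim2p1 (m n : nat) (M : 'M[bool]_(m, n)) :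
  disc_plus M / 3 <= disc_minus M /\ disc_minus M / 3 <= disc_plus M.
Proof.
have plus_le : disc_plus M <= 3 * disc_minus M.
  exact: bimax_le_3_bimaxN (disc_quadrant_sum_zero M).
have minus_le : disc_minus M <= 3 * disc_plus M.
  exact: bimaxN_le_3_bimax (disc_quadrant_sum_zero M).
by split; lra.
Qed.
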